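(* For every closed recHML formula $\varphi$, $[\![\varphi]\!]_F\cap\mathrm{Act}^\omega=[\![\varphi]\!]_L$.
   Context: Fix a finite set $\mathrm{Act}$ of actions. recHML formulae: $\varphi::=\mathrm{tt}\mid\mathrm{ff}\mid\varphi\vee\varphi\mid\varphi\wedge\varphi\mid\langle A\rangle\varphi\mid[A]\varphi\mid\min X.\varphi\mid\max X.\varphi\mid X$ ($A\subseteq\mathrm{Act}$), guarded. For a set of traces $D$ (either $D=\mathrm{Act}^\omega$, giving the linear-time semantics $[\![\cdot]\!]_L$, or $D=\mathrm{Fin}=\mathrm{Act}^\omega\cup\mathrm{Act}^*$, giving the finfinite semantics $[\![\cdot]\!]_F$) and an environment $\sigma$ from variables to subsets of $D$: $[\![\mathrm{tt}]\!]=D$, $[\![\mathrm{ff}]\!]=\emptyset$, $\vee,\wedge$ are union/intersection, $[\![\langle A\rangle\varphi,\sigma]\!]=\{ag\in D\mid a\in A,g\in[\![\varphi,\sigma]\!]\}$, $[\![[A]\varphi,\sigma]\!]=\{g\in D\mid\forall a\in A,\forall g'.\ g=ag'\Rightarrow g'\in[\![\varphi,\sigma]\!]\}$, $[\![\min X.\varphi,\sigma]\!]=\bigcap\{S\subseteq D\mid[\![\varphi,\sigma[X\mapsto S]]\!]\subseteq S\}$, $[\![\max X.\varphi,\sigma]\!]=\bigcup\{S\subseteq D\mid S\subseteq[\![\varphi,\sigma[X\mapsto S]]\!]\}$, $[\![X,\sigma]\!]=\sigma(X)$. *)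

From mathcomp Require Import all_boot.
Set Implicit Arguments. Unset Strict Implicit. Unset Printing Implicit Defensive.

Section RecHML.
Variable Act : finType.

Inductive trace : Type :=
| TFin of seq Act
| TInf of (nat -> Act).

Definition tcons (a : Act) (g : trace) : trace :=
  match g with
  | TFin l => TFin (a :: l)
  | TInf f => TInf (fun n => if n is k.+1 then f k else a)
  end.

(* Act^omega and Fin = Act^omega u Act^star as subsets of trace *)
Definition Omega : trace -> Prop := fun g => exists f, g = TInf f.
Definition Finf : trace -> Prop := fun _ => True.

Inductive form : Type :=
| ftt | fff
| fOr of form & form
| fAnd of form & form
| fDia of {set Act} & form
| fBox of {set Act} & form
| fMin of nat & form
| fMax of nat & form
| fVar of nat.

Fixpoint free (X : nat) (phi : form) : Prop :=
  match phi with
  | ftt | fff => False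
  | fOr p q | fAnd p q => free X p \/ free X q
  | fDia _ p | fBox _ p => free X p
  | fMin Y p | fMax Y p => Y <> X /\ free X p
  | fVar Y => Y = X
  end.

Definition closed_form (phi : form) : Prop := forall X, ~ free X phi.

Fixpoint guarded_in (X : nat) (phi : form) : Prop :=
  match phi with
  | ftt | fff => True
  | fOr p q | fAnd p q => guarded_in X p /\ guarded_in X q
  | fDia _ _ | fBox _ _ => True
  | fMin Y p | fMax Y p => Y = X \/ guarded_in X p
  | fVar Y => Y <> X
  end.

Fixpoint guarded (phi : form) : Prop :=
  match phi with
  | ftt | fff | fVar _ => True
  | fOr p q | fAnd p q => guarded p /\ guarded q
  | fDia _ p | fBox _ p => guarded p
  | fMin X p | fMax X p => guarded_in X p /\ guarded p
  end.

Definition env := nat -> trace -> Prop.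

Definition upd (s : env) (X : nat) (S : trace -> Prop) : env :=
  fun Y => if Y == X then S else s Y.

Fixpoint sem (D : trace -> Prop) (s : env) (phi : form) : trace -> Prop :=
  match phi with
  | ftt => D
  | fff => fun _ => False
  | fOr p q => fun g => sem D s p g \/ sem D s q g
  | fAnd p q => fun g => sem D s p g /\ sem D s q g
  | fDia A p => fun g => D g /\
      exists a g', a \in A /\ g = tcons a g' /\ sem D s p g'
  | fBox A p => fun g => D g /\
      forall a g', a \in A -> g = tcons a g' -> sem D s p g'
  | fMin X p => fun g =>
      forall S : trace -> Prop, (forall h, S h -> D h) ->
        (forall h, sem D (upd s X S) p h -> S h) -> S g
  | fMax X p => fun g =>
      exists S : trace -> Prop, (forall h, S h -> D h) /\
        (forall h, S h -> sem D (upd s X S) p h) /\ S g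
  | fVar X => s X
  end.

Definition semL := sem Omega.
Definition semF := sem Finf.

End RecHML.

From mathcomp Require Import all_boot.
Set Implicit Arguments. Unset Strict Implicit. Unset Printing Implicit Defensive.

(* Each connective is
     handled by its own lemma; the fixpoint cases restrict a (pre/post)
     fixpoint candidate of one semantics to a candidate for the other.
   For a closed formula the hypotheses on environments are vacuous, which
   gives [mainTheorem13]. *)

Section Transfer.
Variable Act : finType.

Implicit Types (D : trace Act -> Prop) (s sF sL : env Act) (phi p q : form Act)
  (g h : trace Act) (S : trace Act -> Prop).

Definition env_in_dom D phi s :=
  forall X, free X phi -> forall g, s X g -> D g.

Definition agree_on_omega phi sF sL :=
  forall X, free X phi -> forall g, Omega g -> (sF X g <-> sL X g).

Lemma Omega_tcons (a : Act) g : Omega (tcons a g) -> Omega g.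
Proof. by case: g => [l|f] [f' E] //; exists f. Qed.

Lemma sem_in_dom D phi s : env_in_dom D phi s -> forall g, sem D s phi g -> D g.
Proof.
elim: phi s => [||p IHp q IHq|p IHp q IHq|A p _|A p _|X p IHp|X p _|X] s Hs g //=.
- by case=> [/IHp|/IHq]; apply=> Y HY; apply: Hs; [left|right].
- by case=> /IHp + _; apply=> Y HY; apply: Hs; left.
- by case.
- by case.
- apply; first by [].
  apply: IHp => Y HY; rewrite /upd; case: eqP => [_ //|ne].
  by apply: Hs; split=> // E; apply: ne.
- by case=> S [SD [_ Sg]]; apply: SD.
- exact: Hs.
Qed.

Definition transfers phi :=
  forall sF sL, agree_on_omega phi sF sL -> env_in_dom (@Omega Act) phi sL ->
  forall g, Omega g -> (semF sF phi g <-> semL sL phi g).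

(* Both premises of [transfers] pass from a binder X.p (min or max alike,
   their free variables coincide) to the body p under matching updates. *)
Lemma agree_on_omega_upd X p sF sL SF SL :
  agree_on_omega (fMin X p) sF sL -> (forall h, Omega h -> (SF h <-> SL h)) ->
  agree_on_omega p (upd sF X SF) (upd sL X SL).
Proof.
move=> Hs HS Y HY h Oh; rewrite /upd; case: eqP => [_|ne]; first exact: HS.
by apply: Hs => //; split=> // E; apply: ne.
Qed.

Lemma env_in_dom_upd D X p s S :
  env_in_dom D (fMin X p) s -> (forall h, S h -> D h) ->
  env_in_dom D p (upd s X S).
Proof.
move=> Hs HS Y HY h; rewrite /upd; case: eqP => [_|ne]; first exact: HS.
by apply: Hs; split=> // E; apply: ne.
Qed.

Lemma agree_on_omega_sub phi p sF sL :
  (forall X, free X p -> free X phi) ->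
  agree_on_omega phi sF sL -> agree_on_omega p sF sL.
Proof. by move=> Hsub Hs X /Hsub; apply: Hs. Qed.

Lemma env_in_dom_sub D phi p s :
  (forall X, free X p -> free X phi) -> env_in_dom D phi s -> env_in_dom D p s.
Proof. by move=> Hsub Hs X /Hsub; apply: Hs. Qed.

Lemma transfers_or p q : transfers p -> transfers q -> transfers (fOr p q).
Proof.
move=> Tp Tq sF sL Ha Hd g Og.
have subp X : free X p -> free X (fOr p q) by left.
have subq X : free X q -> free X (fOr p q) by right.
have Ep := Tp sF sL (agree_on_omega_sub subp Ha) (env_in_dom_sub subp Hd) g Og.
have Eq := Tq sF sL (agree_on_omega_sub subq Ha) (env_in_dom_sub subq Hd) g Og.
by move: Ep Eq; rewrite /semF /semL /=; tauto.
Qed.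

Lemma transfers_and p q : transfers p -> transfers q -> transfers (fAnd p q).
Proof.
move=> Tp Tq sF sL Ha Hd g Og.
have subp X : free X p -> free X (fAnd p q) by left.
have subq X : free X q -> free X (fAnd p q) by right.
have Ep := Tp sF sL (agree_on_omega_sub subp Ha) (env_in_dom_sub subp Hd) g Og.
have Eq := Tq sF sL (agree_on_omega_sub subq Ha) (env_in_dom_sub subq Hd) g Og.
by move: Ep Eq; rewrite /semF /semL /=; tauto.
Qed.

Lemma transfers_dia A p : transfers p -> transfers (fDia A p).
Proof.
move=> Tp sF sL Ha Hd g Og; rewrite /semF /semL /=.
split=> [[_ [a [g' [Ha' [Eg Hg']]]]]|[_ [a [g' [Ha' [Eg Hg']]]]]].
all: have Og' : Omega g' by apply: (@Omega_tcons a); rewrite -Eg.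
all: have [toL toF] := Tp sF sL Ha Hd g' Og'.
- by split=> //; exists a, g'; split=> //; split=> //; apply: toL.
- by split=> //; exists a, g'; split=> //; split=> //; apply: toF.
Qed.

Lemma transfers_box A p : transfers p -> transfers (fBox A p).
Proof.
move=> Tp sF sL Ha Hd g Og; rewrite /semF /semL /=.
split=> [[_ Hb]|[_ Hb]]; split=> // a g' Ha' Eg.
all: have Og' : Omega g' by apply: (@Omega_tcons a); rewrite -Eg.
all: have [toL toF] := Tp sF sL Ha Hd g' Og'.
- exact: toL (Hb a g' Ha' Eg).
- exact: toF (Hb a g' Ha' Eg).
Qed.

(* Least fixpoints: a linear prefixpoint S yields the finfinite prefixpoint
   "infinite implies S", and a finfinite prefixpoint S yields the linear
   prefixpoint S restricted to Act^omega. *)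
Lemma transfers_min X p : transfers p -> transfers (fMin X p).
Proof.
move=> Tp sF sL Ha Hd g Og; rewrite /semF /semL /=.
split=> [HF S SO HS|HL S _ HS].
- pose SF h := Omega h -> S h.
  have Hagree : agree_on_omega p (upd sF X SF) (upd sL X S).
    apply: agree_on_omega_upd Ha _ => k Ok.
    by rewrite /SF; split=> [/(_ Ok)|].
  have Hdom := env_in_dom_upd Hd SO.
  apply: (HF SF) => // h Hh Oh; apply: HS.
  exact: (proj1 (Tp _ _ Hagree Hdom h Oh)).
- pose SO h := S h /\ Omega h.
  have SOdom : forall h, SO h -> Omega h by move=> h [].
  have Hagree : agree_on_omega p (upd sF X S) (upd sL X SO).
    apply: agree_on_omega_upd Ha _ => k Ok.
    by rewrite /SO; split=> [|[]].
  have Hdom := env_in_dom_upd Hd SOdom.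
  suff [] : SO g by [].
  apply: (HL SO SOdom) => h Hh.
  have Oh : Omega h := sem_in_dom Hdom Hh.
  by split=> //; apply: HS; apply: (proj2 (Tp _ _ Hagree Hdom h Oh)).
Qed.

(* Greatest fixpoints: a finfinite postfixpoint restricts to a linear one,
   and a linear postfixpoint is already a finfinite one. *)
Lemma transfers_max X p : transfers p -> transfers (fMax X p).
Proof.
move=> Tp sF sL Ha Hd g Og; rewrite /semF /semL /=.
split=> [[S [_ [HS Sg]]]|[S [SO [HS Sg]]]].
- pose SO h := S h /\ Omega h.
  have SOdom : forall h, SO h -> Omega h by move=> h [].
  have Hagree : agree_on_omega p (upd sF X S) (upd sL X SO).
    apply: agree_on_omega_upd Ha _ => k Ok.
    by rewrite /SO; split=> [|[]].
  exists SO; split=> //; split=> // h [Sh Oh].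
  exact: (proj1 (Tp _ _ Hagree (env_in_dom_upd Hd SOdom) h Oh) (HS h Sh)).
- have Hagree : agree_on_omega p (upd sF X S) (upd sL X S).
    exact: agree_on_omega_upd Ha _.
  exists S; split=> //; split=> // h Sh.
  exact: (proj2 (Tp _ _ Hagree (env_in_dom_upd Hd SO) h (SO h Sh)) (HS h Sh)).
Qed.

Lemma transfer phi : transfers phi.
Proof.
elim: phi => [||p Tp q Tq|p Tp q Tq|A p Tp|A p Tp|X p Tp|X p Tp|X].
- by move=> sF sL _ _ g Og.
- by move=> sF sL _ _ g Og.
- exact: transfers_or.
- exact: transfers_and.
- exact: transfers_dia.
- exact: transfers_box.
- exact: transfers_min.
- exact: transfers_max.
- by move=> sF sL Ha _ g Og; apply: Ha.
Qed.

End Transfer.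

Theorem mainTheorem13 (Act : finType) (phi : form Act) :
  closed_form phi -> guarded phi ->
  forall (sF sL : env Act) (g : trace Act),
    (semF sF phi g /\ Omega g) <-> semL sL phi g.
Proof.
move=> Hclosed _ sF sL g.
have Hagree : agree_on_omega phi sF sL by move=> X /Hclosed.
have Hdom : env_in_dom (@Omega Act) phi sL by move=> X /Hclosed.
split=> [[HF Og]|HL]; first exact: (proj1 (transfer Hagree Hdom Og)).
have Og : Omega g := sem_in_dom Hdom HL.
by split=> //; apply: (proj2 (transfer Hagree Hdom Og)).
Qed.
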